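(* Let $g\ge1$, $n=g+1$, $B\in\mathbb Z^{g\times n}$ with $B_{i,1}=1$, $B_{i,i+1}=-1$ and other entries $0$, and $Q=BB^T$. Let $\mathbf a$ be a vertex of the Voronoi polytope $V_Q$. Then $$\{B^T\mathbf c:\mathbf c\in\mathcal D_{\mathbf a,Q}\}=\mathcal D_{B^T\mathbf a,I_n}\cap H,$$ where $H=\{\mathbf x\in\mathbb R^n:\sum_{i=1}^nx_i=0\}$.
   Context: $V_Q=\{\mathbf a\in\mathbb R^g:\ \mathbf a^TQ\mathbf a\le(\mathbf a-\mathbf c)^TQ(\mathbf a-\mathbf c)\ \forall\mathbf c\in\mathbb Z^g\}$. For a vertex $\mathbf a$, $\mathcal D_{\mathbf a,Q}=\{\mathbf c\in\mathbb Z^g:\ \mathbf a^TQ\mathbf a=(\mathbf a-\mathbf c)^TQ(\mathbf a-\mathbf c)\}$. For $\mathbf b\in\mathbb R^n$, $\mathcal D_{\mathbf b,I_n}=\{\mathbf c\in\mathbb Z^n:\ \mathbf b^T\mathbf b=(\mathbf b-\mathbf c)^T(\mathbf b-\mathbf c)\}$ (Euclidean metric). The hyperplane $H$ is the space of real 1-cycles $H_1(\Gamma,\mathbb R)$ of the banana graph (the kernel of the edge Laplacian) in edge coordinates. *)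

From HB Require Import structures.
From mathcomp Require Import all_boot all_order all_algebra.
From mathcomp Require Import reals.
Set Implicit Arguments. Unset Strict Implicit. Unset Printing Implicit Defensive.
Import Order.TTheory GRing.Theory Num.Theory.
Local Open Scope ring_scope.

Definition intvec (R : realType) (m : nat) (c : 'cV[int]_m) : 'cV[R]_m :=
  map_mx (fun z : int => z%:~R) c.

Definition qform (R : realType) (m : nat) (Q : 'M[R]_m) (x : 'cV[R]_m) : R :=
  (x^T *m Q *m x) 0 0.

(* The g x (g+1) matrix B: B_{i,1} = 1, B_{i,i+1} = -1 (1-based), others 0. *)
Definition banana_B (g : nat) : 'M[int]_(g, g.+1) :=
  \matrix_(i < g, j < g.+1)
    ((j == ord0)%:R - (j == lift ord0 i)%:R).

Definition banana_Q (R : realType) (g : nat) : 'M[R]_g :=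
  map_mx (fun z : int => z%:~R) (banana_B g *m (banana_B g)^T).

Definition voronoi (R : realType) (m : nat) (Q : 'M[R]_m) (a : 'cV[R]_m) : Prop :=
  forall c : 'cV[int]_m, qform Q a <= qform Q (a - intvec R c).

Definition is_vertex (R : realType) (m : nat) (Q : 'M[R]_m) (a : 'cV[R]_m) : Prop :=
  voronoi Q a /\
  forall (x y : 'cV[R]_m) (t : R), voronoi Q x -> voronoi Q y ->
    0 < t -> t < 1 -> a = (1 - t) *: x + t *: y -> x = y.

Definition Dset (R : realType) (m : nat) (Q : 'M[R]_m) (a : 'cV[R]_m)
  (c : 'cV[int]_m) : Prop :=
  qform Q a = qform Q (a - intvec R c).

Definition Dset_eucl (R : realType) (n : nat) (b : 'cV[R]_n)
  (c : 'cV[int]_n) : Prop :=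
  (b^T *m b) 0 0 = ((b - intvec R c)^T *m (b - intvec R c)) 0 0.

Definition inH (n : nat) (x : 'cV[int]_n) : Prop := \sum_(i < n) x i 0 = 0.

From HB Require Import structures.
From mathcomp Require Import all_boot all_order all_algebra.
From mathcomp Require Import reals.
Set Implicit Arguments. Unset Strict Implicit. Unset Printing Implicit Defensive.
Import Order.TTheory GRing.Theory Num.Theory.
Local Open Scope ring_scope.

(* Since Q = B B^T, the Q-norm of a - c is the Euclidean norm of B^T a - B^T c,
   so c lies in D_{a,Q} exactly when B^T c lies in D_{B^T a, I_n}.  It remains
   to see that B^T maps Z^g onto the integer points of H: B^T c is
   (c_1 + ... + c_g, -c_1, ..., -c_g), and an integer x of coordinate sum 0 is
   the image of c_i = -x_{i+1}. *)

Section GramForm.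

Variables (R : realType) (m n : nat) (B : 'M[int]_(m, n)).

Let BtR : 'M[R]_(n, m) := map_mx (fun z : int => z%:~R) B^T.

Lemma qform_gram (x : 'cV[R]_m) :
  qform (map_mx (fun z : int => z%:~R) (B *m B^T)) x
  = ((BtR *m x)^T *m (BtR *m x)) 0 0.
Proof. by rewrite /qform /BtR map_mxM -map_trmx !trmx_mul !trmxK !mulmxA. Qed.

Lemma map_mx_mul_intvec (c : 'cV[int]_m) :
  BtR *m intvec R c = intvec R (B^T *m c).
Proof. by rewrite /intvec map_mxM. Qed.

Lemma Dset_gramE (a : 'cV[R]_m) (c : 'cV[int]_m) :
  Dset (map_mx (fun z : int => z%:~R) (B *m B^T)) a c
  <-> Dset_eucl (BtR *m a) (B^T *m c).
Proof. by rewrite /Dset /Dset_eucl !qform_gram mulmxBr map_mx_mul_intvec. Qed.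

End GramForm.

Section BananaLattice.

Variable g : nat.

Lemma banana_B_row_sum (k : 'I_g) : \sum_(j < g.+1) banana_B g k j = 0.
Proof.
under eq_bigr do rewrite mxE.
rewrite sumrB (bigD1 ord0) //= big1 ?eqxx; last by move=> j /negbTE ->.
rewrite (bigD1 (lift ord0 k)) //= big1 ?eqxx; last by move=> j /negbTE ->.
by rewrite !addr0 subrr.
Qed.

Lemma inH_banana_image (c : 'cV[int]_g) : inH ((banana_B g)^T *m c).
Proof.
rewrite /inH; under eq_bigr do rewrite mxE.
rewrite exchange_big /= big1 // => k _.
under eq_bigr do rewrite mxE.
by rewrite -mulr_suml banana_B_row_sum mul0r.
Qed.

Definition banana_preimage (x : 'cV[int]_g.+1) : 'cV[int]_g :=
  \col_i (- x (lift ord0 i) 0).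

Lemma banana_preimageK (x : 'cV[int]_g.+1) :
  inH x -> (banana_B g)^T *m banana_preimage x = x.
Proof.
move=> Hx; apply/matrixP => j k; rewrite (ord1 k) !mxE.
under eq_bigr do rewrite !mxE.
case: (unliftP ord0 j) => [j'|] ->.
- rewrite (bigD1 j') //= big1 ?addr0; first by rewrite eqxx sub0r mulN1r opprK.
  move=> i ij /=.
  by rewrite (inj_eq (@lift_inj _ ord0)) eq_sym (negbTE ij) subrr mul0r.
- under eq_bigr => i _ do rewrite eqxx (negbTE (neq_lift _ _)) subr0 mul1r.
  move: Hx; rewrite /inH big_ord_recl => /eqP; rewrite addr_eq0 => /eqP ->.
  by rewrite -sumrN.
Qed.

End BananaLattice.

Theorem proposition3p8 (R : realType) (g : nat) (hg : (0 < g)%N)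
  (a : 'cV[R]_g) :
  is_vertex (banana_Q R g) a ->
  forall x : 'cV[int]_(g.+1),
    (exists c : 'cV[int]_g, Dset (banana_Q R g) a c /\ x = (banana_B g)^T *m c)
    <->
    (Dset_eucl (map_mx (fun z : int => z%:~R) (banana_B g)^T *m a) x /\ inH x).
Proof.
move=> _ x; split.
  move=> [c [Dc ->]]; split; [exact/Dset_gramE | exact: inH_banana_image].
move=> [Dx Hx]; exists (banana_preimage x).
have xE := banana_preimageK Hx.
by split; [apply/Dset_gramE; rewrite xE | rewrite xE].
Qed.
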